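(* We have $$\sum_{k=0}^\infty\frac{(30k-7)(-2)^k}{\binom{4k}{2k}}=-\frac{3\pi+64}{6}.$$ *)

From Stdlib Require Import Reals.
From Coquelicot Require Import Coquelicot.
Open Scope R_scope.

Definition cor_term (k : nat) : R :=
  (30 * INR k - 7) * (-2) ^ k / Binomial.C (4 * k) (2 * k).

(* Since 1/((4k+1) C(4k,2k)) = ∫_{-1/2}^{1/2} (1/4 - u^2)^(2k) du (a Beta integral),
   the k-th term is ∫ (30k-7)(4k+1) y^k du with y = -2 (1/4 - u^2)^2 ∈ [-1/8, 0].
   For such y the power series Σ (30k-7)(4k+1) y^k converges geometrically, uniformly
   in u, to (111 y^2 + 136 y - 7)/(1-y)^3, so the series is the integral of this
   rational function of u.  It has the elementary antiderivative
   P(u)/Q(u)^2 - atan(4u/(3-4u^2)), and the two atan values ±π/4 at u = ±1/2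
   produce the π in the sum. *)

From Stdlib Require Import Reals Lra Lia.
From Coquelicot Require Import Coquelicot.
Open Scope R_scope.

Lemma is_RInt_sum_n (f : nat -> R -> R) (I : nat -> R) (a b : R) (n : nat) :
  (forall k, is_RInt (f k) a b (I k)) ->
  is_RInt (fun x => sum_n (fun k => f k x) n) a b (sum_n I n).
Proof.
  intros Hf; induction n as [|n IHn].
  - rewrite sum_O. apply (is_RInt_ext (f 0%nat)); [|apply Hf].
    intros x _. now rewrite sum_O.
  - rewrite sum_Sn. apply (is_RInt_ext _ _ _ _ _ (fun x _ => eq_sym (sum_Sn (fun k => f k x) n))).
    apply (is_RInt_plus _ _ _ _ _ _ IHn (Hf (S n))).
Qed.

Lemma is_lim_seq_is_RInt_uniform (f : nat -> R -> R) (g : R -> R) (e I : nat -> R)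
    (a b J : R) :
  (forall n, is_RInt (f n) a b (I n)) -> is_RInt g a b J ->
  (forall n x, Rmin a b <= x <= Rmax a b -> Rabs (f n x - g x) <= e n) ->
  is_lim_seq e 0 -> is_lim_seq I J.
Proof.
  intros Hf Hg Hfg He.
  assert (Hdist : forall n, Rabs (I n - J) <= Rabs (b - a) * e n).
  { intros n. apply (norm_RInt_le_const_abs (fun x => f n x - g x)).
    - apply Hfg.
    - apply (is_RInt_minus _ _ _ _ _ _ (Hf n) Hg). }
  assert (Hdist0 : is_lim_seq (fun n => I n - J) 0).
  { apply is_lim_seq_abs_0.
    apply (is_lim_seq_le_le (fun _ => 0) _ (fun n => Rabs (b - a) * e n)).
    - intros n; split; [apply Rabs_pos | apply Hdist].
    - apply is_lim_seq_const.
    - replace (Finite 0) with (Rbar_mult (Rabs (b - a)) 0) by (simpl; f_equal; ring).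
      now apply is_lim_seq_scal_l. }
  apply (is_lim_seq_ext (fun n => (I n - J) + J)); [intros n; ring|].
  replace (Finite J) with (Rbar_plus 0 J) by (simpl; f_equal; ring).
  apply (is_lim_seq_plus' _ _ _ _ Hdist0 (is_lim_seq_const J)).
Qed.

(* [Binomial.C n k] uses truncated subtraction, so it is positive even for [k > n]. *)
Lemma binomial_C_pos (n k : nat) : 0 < Binomial.C n k.
Proof.
  unfold Binomial.C. apply Rdiv_lt_0_compat; [apply INR_fact_lt_0|].
  apply Rmult_lt_0_compat; apply INR_fact_lt_0.
Qed.

Lemma central_binomial_S (m : nat) :
  Binomial.C (2 * S m) (S m) =
  Binomial.C (2 * m) m * (2 * INR m + 2) * (2 * INR m + 1) / (INR m + 1) ^ 2.
Proof.
  unfold Binomial.C.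
  replace (2 * S m - S m)%nat with (S m) by lia.
  replace (2 * m - m)%nat with m by lia.
  replace (2 * S m)%nat with (S (S (2 * m))) by lia.
  rewrite !fact_simpl, !mult_INR, !S_INR, mult_INR. simpl (INR 2); simpl (INR 1).
  pose proof (INR_fact_neq_0 m); pose proof (INR_fact_neq_0 (2 * m)); pose proof (pos_INR m).
  field; repeat split; lra.
Qed.

(* With x = u + 1/2 this is x (1 - x), so its powers give the Beta integrals B(n+1, n+1). *)
Definition beta_weight (u : R) : R := / 4 - u ^ 2.

Lemma is_RInt_beta_weight_pow_S (m : nat) (v : R) :
  is_RInt (fun u => beta_weight u ^ m) (-1/2) (1/2) v ->
  is_RInt (fun u => beta_weight u ^ S m) (-1/2) (1/2)
    ((INR m + 1) / 2 * v / (2 * INR m + 3)).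
Proof.
  intros Hv. pose proof (pos_INR m) as Hm.
  set (G := fun u => u * beta_weight u ^ S m).
  set (dG := fun u => beta_weight u ^ S m - 2 * u ^ 2 * (INR m + 1) * beta_weight u ^ m).
  assert (HdG : is_RInt dG (-1/2) (1/2) (minus (G (1/2)) (G (-1/2)))).
  { apply (is_RInt_derive G dG); intros x _.
    - unfold G, dG, beta_weight. auto_derive; [easy|].
      replace (match m with 0%nat => 1 | S _ => INR m + 1 end) with (INR m + 1)
        by (destruct m; simpl; ring).
      replace (/ 4 + - (x * (x * 1))) with (beta_weight x) by (unfold beta_weight; ring).
      fold (beta_weight x). simpl. ring.
    - apply (ex_derive_continuous dG). unfold dG, beta_weight. auto_derive. easy. }
  (* Integration by parts: [G] vanishes at both endpoints, and [u^2 = 1/4 - beta_weight u]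
     rewrites [dG] as [(2m+3) w^(m+1) - (m+1)/2 w^m]. *)
  replace (minus (G (1/2)) (G (-1/2))) with 0 in HdG
    by (unfold G, beta_weight, minus, plus, opp; simpl; field).
  pose proof (is_RInt_scal _ _ _ (/ (2 * INR m + 3)) _
    (is_RInt_plus _ _ _ _ _ _ HdG (is_RInt_scal _ _ _ ((INR m + 1) / 2) _ Hv))) as Hsum.
  replace ((INR m + 1) / 2 * v / (2 * INR m + 3))
    with (scal (/ (2 * INR m + 3)) (plus 0 (scal ((INR m + 1) / 2) v)))
    by (unfold scal, plus; simpl; unfold mult; simpl; field; lra).
  refine (is_RInt_ext _ _ _ _ _ _ Hsum); intros x _.
  unfold scal, plus; simpl; unfold mult; simpl. unfold dG.
  change (beta_weight x ^ S m) with (beta_weight x * beta_weight x ^ m).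
  generalize (beta_weight x ^ m); intros z. unfold beta_weight. field. lra.
Qed.

Lemma is_RInt_beta_weight_pow (n : nat) :
  is_RInt (fun u => beta_weight u ^ n) (-1/2) (1/2)
    (/ (INR (2 * n + 1) * Binomial.C (2 * n) n)).
Proof.
  induction n as [|n IHn].
  - replace (/ (INR (2 * 0 + 1) * Binomial.C (2 * 0) 0)) with (scal (1/2 - -1/2) 1)
      by (unfold Binomial.C, scal; simpl; unfold mult; simpl; field).
    apply (is_RInt_ext (fun _ => 1)); [easy | apply (is_RInt_const (V := R_NormedModule))].
  - replace (/ (INR (2 * S n + 1) * Binomial.C (2 * S n) (S n)))
      with ((INR n + 1) / 2 * / (INR (2 * n + 1) * Binomial.C (2 * n) n) / (2 * INR n + 3)).
    { now apply is_RInt_beta_weight_pow_S. }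
    rewrite central_binomial_S.
    pose proof (binomial_C_pos (2 * n) n); pose proof (pos_INR n).
    replace (2 * S n + 1)%nat with (S (S (2 * n + 1))) by lia.
    rewrite !S_INR, plus_INR, mult_INR. simpl (INR 2); simpl (INR 1).
    field; repeat split; lra.
Qed.

Definition series_var (u : R) : R := -2 * beta_weight u ^ 2.

Definition coef (k : nat) : R := (30 * INR k - 7) * (4 * INR k + 1).

Lemma is_RInt_cor_term (k : nat) :
  is_RInt (fun u => coef k * series_var u ^ k) (-1/2) (1/2) (cor_term k).
Proof.
  pose proof (is_RInt_beta_weight_pow (2 * k)) as Hbeta.
  replace (2 * (2 * k))%nat with (4 * k)%nat in Hbeta by lia.
  pose proof (is_RInt_scal _ _ _ (coef k * (-2) ^ k) _ Hbeta) as Hscal.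
  replace (cor_term k)
    with (scal (coef k * (-2) ^ k) (/ (INR (4 * k + 1) * Binomial.C (4 * k) (2 * k)))).
  - refine (is_RInt_ext _ _ _ _ _ _ Hscal); intros x _.
    change (coef k * (-2) ^ k * beta_weight x ^ (2 * k) = coef k * series_var x ^ k).
    unfold series_var. rewrite pow_mult, Rpow_mult_distr. ring.
  - change (coef k * (-2) ^ k * / (INR (4 * k + 1) * Binomial.C (4 * k) (2 * k))
            = cor_term k).
    unfold cor_term, coef.
    pose proof (binomial_C_pos (4 * k) (2 * k)); pose proof (pos_INR k).
    rewrite plus_INR, mult_INR. simpl (INR 4); simpl (INR 1).
    field; split; lra.
Qed.

Definition gen_num (y : R) : R := 111 * y ^ 2 + 136 * y - 7.

Definition tail_num (n : nat) (y : R) : R :=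
  120 * y * (1 + y) + (240 * INR n + 2) * y * (1 - y)
  + (120 * INR n ^ 2 + 2 * INR n - 7) * (1 - y) ^ 2.

Lemma sum_n_coef_pow (n : nat) (y : R) : y <> 1 ->
  sum_n (fun k => coef k * y ^ k) n = (gen_num y - y ^ S n * tail_num (S n) y) / (1 - y) ^ 3.
Proof.
  intros Hy. assert (Hy' : 1 - y <> 0) by lra.
  induction n as [|n IHn].
  - rewrite sum_O. unfold coef, gen_num, tail_num. simpl. field. exact Hy'.
  - rewrite sum_Sn, IHn. unfold plus; simpl. unfold coef, gen_num, tail_num.
    rewrite !S_INR. simpl pow. generalize (y ^ n); intros z. field. exact Hy'.
Qed.

Lemma Rabs_tail_num_le (n : nat) (y : R) : -1/8 <= y <= 0 ->
  Rabs (tail_num n y) <= 1000 * (INR n + 1) ^ 2.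
Proof.
  intros Hy. pose proof (pos_INR n) as Hn.
  unfold tail_num. set (m := INR n) in *.
  assert (Ha : -1 <= y * (1 + y) <= 0) by nra.
  assert (Hb : -1 <= y * (1 - y) <= 0) by nra.
  assert (Hc : 1 <= (1 - y) ^ 2 <= 2) by nra.
  replace (120 * y * (1 + y)) with (120 * (y * (1 + y))) by ring.
  replace ((240 * m + 2) * y * (1 - y)) with ((240 * m + 2) * (y * (1 - y))) by ring.
  set (a := y * (1 + y)) in *. set (b := y * (1 - y)) in *. set (c := (1 - y) ^ 2) in *.
  assert (0 <= 120 * m ^ 2 + 2 * m) by nra.
  assert (-(240 * m + 2) <= (240 * m + 2) * b <= 0) by nra.
  assert (0 <= (120 * m ^ 2 + 2 * m) * c <= 2 * (120 * m ^ 2 + 2 * m)) by nra.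
  apply Rabs_le. split; nra.
Qed.

Lemma sqr_S_le_pow4 (n : nat) : (INR n + 1) ^ 2 <= 4 ^ n.
Proof.
  induction n as [|n IHn]; [simpl; lra|].
  rewrite S_INR. simpl pow. simpl pow in IHn. pose proof (pos_INR n). nra.
Qed.

Lemma Rabs_tail_le (n : nat) (y : R) : -1/8 <= y <= 0 ->
  Rabs (y ^ n * tail_num n y / (1 - y) ^ 3) <= 1000 * (1/2) ^ n.
Proof.
  intros Hy.
  assert (Hden : 1 <= (1 - y) ^ 3) by nra.
  assert (Hpow : Rabs y ^ n <= (1/8) ^ n).
  { apply pow_incr. split; [apply Rabs_pos|]. rewrite Rabs_left1; lra. }
  rewrite Rabs_div, Rabs_mult, <- RPow_abs, (Rabs_right ((1 - y) ^ 3)) by lra.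
  assert (Hinv : 0 < / (1 - y) ^ 3 <= 1).
  { split; [apply Rinv_0_lt_compat; lra|]. rewrite <- Rinv_1. apply Rinv_le_contravar; lra. }
  assert (Hgeom : (1/8) ^ n * 4 ^ n = (1/2) ^ n)
    by (rewrite <- Rpow_mult_distr; f_equal; field).
  pose proof (Rabs_tail_num_le n y Hy); pose proof (sqr_S_le_pow4 n).
  assert (Hprod : 0 <= Rabs y ^ n * Rabs (tail_num n y))
    by (apply Rmult_le_pos; [apply pow_le|]; apply Rabs_pos).
  apply Rle_trans with (Rabs y ^ n * Rabs (tail_num n y)); [unfold Rdiv; nra|].
  rewrite <- Hgeom. replace (1000 * ((1/8) ^ n * 4 ^ n)) with ((1/8) ^ n * (1000 * 4 ^ n)) by ring.
  apply Rmult_le_compat; [apply pow_le, Rabs_pos | apply Rabs_pos | exact Hpow | lra].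
Qed.

Lemma series_var_bounds (u : R) : -1/2 <= u <= 1/2 -> -1/8 <= series_var u <= 0.
Proof.
  intros Hu. unfold series_var, beta_weight.
  assert (0 <= / 4 - u ^ 2 <= 1/4) by nra. nra.
Qed.

Definition limit_integrand (u : R) : R := gen_num (series_var u) / (1 - series_var u) ^ 3.

Lemma Rabs_sum_n_coef_pow_sub_limit (n : nat) (u : R) : -1/2 <= u <= 1/2 ->
  Rabs (sum_n (fun k => coef k * series_var u ^ k) n - limit_integrand u)
  <= 1000 * (1/2) ^ S n.
Proof.
  intros Hu. pose proof (series_var_bounds u Hu) as Hy.
  unfold limit_integrand. set (y := series_var u) in *.
  rewrite sum_n_coef_pow by lra.
  replace ((gen_num y - y ^ S n * tail_num (S n) y) / (1 - y) ^ 3 - gen_num y / (1 - y) ^ 3)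
    with (- (y ^ S n * tail_num (S n) y / (1 - y) ^ 3)) by (field; lra).
  rewrite Rabs_Ropp. now apply Rabs_tail_le.
Qed.

Definition limit_primitive (u : R) : R :=
  (-3476/3 * u + 9200/3 * u ^ 3 - 13760/3 * u ^ 5 - 256 * u ^ 7)
    / (16 * u ^ 4 - 8 * u ^ 2 + 9) ^ 2
  - atan (4 * u / (3 - 4 * u ^ 2)).

Lemma is_derive_limit_primitive (u : R) : -1/2 <= u <= 1/2 ->
  is_derive limit_primitive u (limit_integrand u).
Proof.
  intros Hu.
  assert (0 < 16 * u ^ 4 - 8 * u ^ 2 + 9) by nra.
  assert (0 < 3 - 4 * u ^ 2) by nra.
  unfold limit_primitive. auto_derive; [repeat split; nra|].
  unfold limit_integrand, gen_num, series_var, beta_weight.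
  assert (0 < 1 + (4 * u / (3 - 4 * u ^ 2)) ^ 2) by nra.
  field. repeat split; nra.
Qed.

Lemma is_RInt_limit_integrand :
  is_RInt limit_integrand (-1/2) (1/2) (- (3 * PI + 64) / 6).
Proof.
  replace (- (3 * PI + 64) / 6) with (minus (limit_primitive (1/2)) (limit_primitive (-1/2))).
  - apply (is_RInt_derive limit_primitive); intros x Hx;
      rewrite Rmin_left, Rmax_right in Hx by lra.
    + now apply is_derive_limit_primitive.
    + apply (ex_derive_continuous limit_integrand).
      pose proof (series_var_bounds x Hx) as Hy.
      unfold limit_integrand, gen_num, series_var, beta_weight in *.
      auto_derive. assert (0 < 1 - -2 * (/ 4 - x ^ 2) ^ 2) by lra. simpl in *. nra.
  - unfold minus, plus, opp; simpl. unfold limit_primitive.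
    replace (4 * (1/2) / (3 - 4 * (1/2) ^ 2)) with 1 by field.
    replace (4 * (-1/2) / (3 - 4 * (-1/2) ^ 2)) with (Ropp 1) by field.
    rewrite atan_opp, atan_1. field.
Qed.

Theorem corollary1p2 :
  is_series (fun k : nat => (30 * INR k - 7) * (-2) ^ k / Binomial.C (4 * k) (2 * k))
    (- (3 * PI + 64) / 6).
Proof.
  change (is_lim_seq (sum_n cor_term) (- (3 * PI + 64) / 6)).
  apply (is_lim_seq_is_RInt_uniform
           (fun n u => sum_n (fun k => coef k * series_var u ^ k) n) limit_integrand
           (fun n => 1000 * (1/2) ^ S n) (sum_n cor_term) (-1/2) (1/2)).
  - intros n. apply is_RInt_sum_n, is_RInt_cor_term.
  - exact is_RInt_limit_integrand.
  - intros n x Hx. rewrite Rmin_left, Rmax_right in Hx by lra.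
    now apply Rabs_sum_n_coef_pow_sub_limit.
  - apply (is_lim_seq_incr_1 (fun n => 1000 * (1/2) ^ n)).
    replace (Finite 0) with (Rbar_mult 1000 0) by (simpl; f_equal; ring).
    apply is_lim_seq_scal_l, is_lim_seq_geom. rewrite Rabs_right; lra.
Qed.
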